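(* Let $G$ be a finite group such that either $G$ cannot be generated by two elements, or $G$ has trivial center. Then the difference graph $\mathcal{D}(G)$ is null (has no edges) if and only if $\mathcal{D}(H)$ is null for every proper subgroup $H$ of $G$.
   Context: For a finite group $G$ with identity $e$: the intersection power graph $\mathcal{G}_I(G)$ has vertex set $G$, two distinct non-identity vertices $x,y$ being adjacent iff $\langle x\rangle\cap\langle y\rangle\neq\{e\}$, and $e$ being adjacent to every other vertex. The power graph $\mathcal{P}(G)$ has vertex set $G$, two distinct vertices being adjacent iff one is a power of the other. The undeleted difference graph of $G$ has vertex set $G$ and edge set $E(\mathcal{G}_I(G))\setminus E(\mathcal{P}(G))$; the difference graph $\mathcal{D}(G)$ is obtained from it by deleting all isolated vertices. $\mathcal{D}(G)$ is null iff it has no edges, i.e. iff $\mathcal{G}_I(G)=\mathcal{P}(G)$. *)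

From mathcomp Require Import all_boot all_fingroup all_solvable.
Set Implicit Arguments. Unset Strict Implicit. Unset Printing Implicit Defensive.
Local Open Scope group_scope.

Definition ipg_adj (gT : finGroupType) (x y : gT) : Prop :=
  x <> y /\ (x = 1 \/ y = 1 \/ <[x]> :&: <[y]> <> 1).

Definition pg_adj (gT : finGroupType) (x y : gT) : Prop :=
  x <> y /\ ((exists k : nat, x = y ^+ k) \/ (exists k : nat, y = x ^+ k)).

(* D(H) is null: the edge set E(G_I(H)) \ E(P(H)) is empty (vertices range over H;
   cyclic subgroups and powers of elements of H are the same computed in H or gT). *)
Definition diff_graph_null (gT : finGroupType) (H : {set gT}) : Prop :=
  forall x y, x \in H -> y \in H -> ipg_adj x y -> pg_adj x y.

From mathcomp Require Import all_boot all_fingroup all_solvable.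
Set Implicit Arguments. Unset Strict Implicit. Unset Printing Implicit Defensive.
Local Open Scope group_scope.

(* Being null passes to subgroups, so only the converse needs an
   argument. An edge x -- y of D(G) lies in D(<<x, y>>), and <[x]> :&: <[y]> is
   central in <<x, y>>. So if <<x, y>> is proper we use the hypothesis on
   subgroups, and if <<x, y>> = G then G is 2-generated with <[x]> :&: <[y]>
   nontrivial and central, which the assumption on G rules out. *)

Section DifferenceGraph.

Variable gT : finGroupType.
Implicit Types (x y : gT) (H K : {set gT}).

Lemma diff_graph_nullS H K : H \subset K -> diff_graph_null K -> diff_graph_null H.
Proof. by move=> /subsetP sHK nullK x y /sHK xK /sHK yK; apply: nullK. Qed.

Lemma pg_adj_trivial x y : x <> y -> x = 1 \/ y = 1 -> pg_adj x y.
Proof.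
by move=> neq_xy [x1 | y1]; split=> //; [left | right]; exists 0%N; rewrite ?x1 ?y1.
Qed.

Lemma mem_gen2l x y : x \in <<[set x; y]>>.
Proof. by rewrite mem_gen // !inE eqxx. Qed.

Lemma mem_gen2r x y : y \in <<[set x; y]>>.
Proof. by rewrite mem_gen // !inE eqxx orbT. Qed.

Lemma cycle_meet_sub_center_gen2 x y :
  <[x]> :&: <[y]> \subset 'Z(<<[set x; y]>>).
Proof.
rewrite subsetI subIset ?cycle_subG ?mem_gen2l //=.
rewrite cent_gen centsC subUset !sub1set.
have x_cent : x \in 'C(<[x]>) by apply: (subsetP (cycle_abelian x)); apply: cycle_id.
have y_cent : y \in 'C(<[y]>) by apply: (subsetP (cycle_abelian y)); apply: cycle_id.
by rewrite (subsetP (centS (subsetIl _ _)) _ x_cent)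
           (subsetP (centS (subsetIr _ _)) _ y_cent).
Qed.

Lemma ipg_adj_pg_adj_centerless x y :
  'Z(<<[set x; y]>>) = 1 -> ipg_adj x y -> pg_adj x y.
Proof.
move=> Z1 [neq_xy [x1 | [y1 | meet_ntriv]]].
- exact: pg_adj_trivial (or_introl x1).
- exact: pg_adj_trivial (or_intror y1).
- by case: meet_ntriv; apply/trivgP; rewrite -Z1 cycle_meet_sub_center_gen2.
Qed.

End DifferenceGraph.

Theorem theorem2p2 (gT : finGroupType) (G : {group gT}) :
  (~ (exists x y : gT, G :=: <<[set x; y]>>) \/ 'Z(G) = 1) ->
  (diff_graph_null G <->
     forall H : {group gT}, H \proper G -> diff_graph_null H).
Proof.
move=> hypG; split=> [nullG H /proper_sub sHG | nullH x y xG yG adj_xy].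
  exact: diff_graph_nullS nullG.
have sXG : <<[set x; y]>> \subset G by rewrite gen_subG subUset !sub1set xG yG.
have [ltXG | ] := boolP (<<[set x; y]>>%G \proper G).
  by apply: (nullH _ ltXG); rewrite ?mem_gen2l ?mem_gen2r.
rewrite properEneq sXG andbT negbK => /eqP /= eqXG.
case: hypG => [not_gen2 | Z1]; first by case: not_gen2; exists x, y; rewrite -eqXG.
by apply: ipg_adj_pg_adj_centerless adj_xy; rewrite -Z1 -eqXG.
Qed.
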